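(* Let $(T_n)$ be a sequence of tournaments with $|T_n|\to\infty$ such that $c_3=\lim\mathbf{pr}(C_3,T_n)$ and $c_4=\lim\mathbf{pr}(C_4,T_n)$ exist. Then $$c_4\ge \frac{18c_3^2}{1+8c_3}.$$
   Context: For tournaments $T,H$, $\mathbf{pr}(H,T)$ denotes the probability that a uniformly random set of $|H|$ vertices of $T$ spans a subtournament isomorphic to $H$. $C_3$ is the cyclically oriented triangle and $C_4$ is the $4$-vertex tournament (unique up to isomorphism) containing a directed Hamiltonian $4$-cycle. *)

From HB Require Import structures.
From mathcomp Require Import all_boot all_order all_algebra.
From mathcomp Require Import all_classical all_reals all_analysis.
Set Implicit Arguments. Unset Strict Implicit. Unset Printing Implicit Defensive.
Import Order.TTheory GRing.Theory Num.Theory.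

Definition tourn_axiom (n : nat) (adj : rel 'I_n) : bool :=
  [forall x, ~~ adj x x] &&
  [forall x, forall y, (x != y) ==> (adj x y != adj y x)].

Record tournament := Tournament {
  tn_size : nat;
  tadj : rel 'I_tn_size;
  tadjP : tourn_axiom tadj }.

Definition spans_iso (H T : tournament) (S : {set 'I_(tn_size T)}) : bool :=
  [exists f : {ffun 'I_(tn_size H) -> 'I_(tn_size T)},
     injectiveb f && (f @: setT == S) &&
     [forall i, forall j, tadj i j == tadj (f i) (f j)]].

Definition ind_count (H T : tournament) : nat :=
  #|[set S : {set 'I_(tn_size T)} | (#|S| == tn_size H) && spans_iso H S]|.

Definition pr {R : realType} (H T : tournament) : R :=
  ((ind_count H T)%:R / ('C(tn_size T, tn_size H))%:R)%R.

Definition C3_adj : rel 'I_3 := fun i j => val j == (val i).+1 %% 3.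
Lemma C3_axiom : tourn_axiom C3_adj.
Proof. apply/andP; split; apply/forallP; case=> [[|[|[|[|]]]] ?] //; apply/forallP; case=> [[|[|[|[|]]]] ?] //. Qed.
Definition C3 : tournament := Tournament C3_axiom.

Definition C4_adj : rel 'I_4 := fun i j =>
  (val i, val j) \in [:: (0,1); (1,2); (2,3); (3,0); (0,2); (1,3)].
Lemma C4_axiom : tourn_axiom C4_adj.
Proof. apply/andP; split; apply/forallP; case=> [[|[|[|[|[|]]]]] ?] //; apply/forallP; case=> [[|[|[|[|[|]]]]] ?] //. Qed.
Definition C4 : tournament := Tournament C4_axiom.

From HB Require Import structures.
From mathcomp Require Import all_boot all_order all_algebra.
From mathcomp Require Import all_classical all_reals all_analysis.
From mathcomp Require Import ring lra zify.
Import Order.TTheory GRing.Theory Num.Theory numFieldNormedType.Exports.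
Set Implicit Arguments. Unset Strict Implicit. Unset Printing Implicit Defensive.

(* For an arc u -> v of a tournament with out-degree function d, let t(u, v) be the number of
   cyclic triangles through it.  Summed over the arcs, t counts the cyclic triangles (three
   times each), t^2 counts them once more plus twice the copies of C4, and t (d v - d u) sums
   to zero, while d v - d u and its square only depend on the out-degree sequence, which in
   turn determines the number of cyclic triangles.  Cauchy-Schwarz for (1 + lam) t -
   lam (d v - d u) over the arcs thus bounds the number of C4 from below in terms of the
   number of C3; divided by n^6 this becomes a polynomial inequality in 1/n, pr(C3, T) and
   pr(C4, T) that passes to the limit, and lam = 6 c3 / (1 + 2 c3) gives the bound. *)

Section TournamentAxioms.
Variable T : tournament.
Implicit Types x y : 'I_(tn_size T).

Lemma tadj_irr x : tadj x x = false.
Proof. by case/andP: (tadjP T) => /forallP/(_ x)/negbTE. Qed.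

Lemma tadj_total x y : x != y -> tadj x y = ~~ tadj y x.
Proof.
move=> xy; case/andP: (tadjP T) => _ /forallP/(_ x)/forallP/(_ y).
by rewrite xy; case: (tadj x y); case: (tadj y x).
Qed.

Lemma tadj_asym x y : tadj x y -> tadj y x = false.
Proof.
have [-> | xy] := eqVneq x y; first by rewrite tadj_irr.
by rewrite tadj_total // => /negbTE.
Qed.

End TournamentAxioms.

Definition preserves_adj (H T : tournament) (f : 'I_(tn_size H) -> 'I_(tn_size T)) :=
  [forall i, forall j, tadj i j == tadj (f i) (f j)].

Definition embeddings (H T : tournament) :=
  [set f : {ffun 'I_(tn_size H) -> 'I_(tn_size T)} | preserves_adj f].

Lemma preserves_adjP (H T : tournament) (f : 'I_(tn_size H) -> 'I_(tn_size T)) :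
  reflect (forall i j, tadj i j = tadj (f i) (f j)) (preserves_adj f).
Proof.
apply: (iffP forallP) => [fP i j | fP i]; first exact/eqP/(forallP (fP i)).
by apply/forallP => j; rewrite fP.
Qed.

Lemma preserves_adj_inj (H T : tournament) (f : 'I_(tn_size H) -> 'I_(tn_size T)) :
  preserves_adj f -> injective f.
Proof.
move=> /preserves_adjP fP i j fij; apply/eqP/negPn/negP => /tadj_total.
by rewrite !fP fij !tadj_irr.
Qed.

Lemma card_classical_setT (A : finType) : #|setT : set A| = #|A|.
Proof. by apply: eq_card => x; rewrite in_setT. Qed.

Lemma card_embeddings_image (H T : tournament) (f0 : {ffun 'I_(tn_size H) -> 'I_(tn_size T)}) :
  preserves_adj f0 ->
  #|[set g in embeddings H T | g @: setT == f0 @: setT]| = #|embeddings H H|.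
Proof.
move=> f0P; have f0_inj := preserves_adj_inj f0P; move/preserves_adjP in f0P.
pose comp (s : {ffun 'I_(tn_size H) -> 'I_(tn_size H)}) := [ffun i => f0 (s i)].
have comp_inj : injective comp.
  by move=> s1 s2 /ffunP e; apply/ffunP => i; apply: f0_inj; have := e i; rewrite !ffunE.
rewrite -(card_imset _ comp_inj); apply: eq_card => g; rewrite !inE.
apply/andP/imsetP => [[/preserves_adjP gP /eqP g_im] | [s]].
  have g_in i : g i \in codom f0.
    have /imsetP[j _ ->] : g i \in f0 @: setT by rewrite -g_im imset_f ?in_setT.
    exact: codom_f.
  pose s := [ffun i => iinv (g_in i)].
  have sK i : f0 (s i) = g i by rewrite ffunE f_iinv.
  exists s; last by apply/ffunP => i; rewrite ffunE sK.
  by rewrite inE; apply/preserves_adjP => i j; rewrite [RHS]f0P !sK gP.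
rewrite inE => sP ->; have s_inj := preserves_adj_inj sP; move/preserves_adjP in sP.
split; first by apply/preserves_adjP => i j; rewrite !ffunE -f0P -sP.
rewrite eqEcard !card_imset //; last by move=> i j; rewrite !ffunE => /f0_inj/s_inj.
rewrite leqnn andbT; apply/fintype.subsetP => _ /imsetP[i _ ->].
by rewrite ffunE imset_f ?in_setT.
Qed.

Lemma card_embeddings (H T : tournament) :
  #|embeddings H T| = (#|embeddings H H| * ind_count H T)%N.
Proof.
rewrite /ind_count -sum1_card.
rewrite (partition_big (fun f : {ffun _ -> _} => f @: setT)
  (fun S => (#|S| == tn_size H) && spans_iso H S)) => [|f]; last first.
  rewrite inE => fP; have f_inj := preserves_adj_inj fP.
  rewrite card_imset // card_classical_setT card_ord eqxx /=.
  by apply/existsP; exists f; rewrite eqxx andbT; apply/andP; split=> //; apply/injectiveP.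
rewrite mulnC -sum_nat_const; apply: eq_big => [S | S]; first by rewrite inE.
move=> /andP[_ /existsP[f0 /andP[/andP[_ /eqP <-] f0P]]].
by rewrite -(card_embeddings_image f0P) -sum1_card; apply: eq_bigl => g; rewrite inE.
Qed.

Definition ffun3 (A : finType) (a b c : A) : {ffun 'I_3 -> A} :=
  [ffun i : 'I_3 => nth a [:: a; b; c] i].

Definition ffun4 (A : finType) (a b c d : A) : {ffun 'I_4 -> A} :=
  [ffun i : 'I_4 => nth a [:: a; b; c; d] i].

Lemma sum_ffun3 (A : finType) (F : {ffun 'I_3 -> A} -> nat) :
  (\sum_f F f = \sum_a \sum_b \sum_c F (ffun3 a b c))%N.
Proof.
rewrite !pair_bigA /= (reindex (fun t : A * A * A => ffun3 t.1.1 t.1.2 t.2)) //=.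
exists (fun f => (f ord0, f (@Ordinal 3 1 isT), f (@Ordinal 3 2 isT))) => [[[a b] c] | f] _.
  by rewrite /= !ffunE.
by apply/ffunP => -[[|[|[|//]]] i]; rewrite !ffunE /=; congr (f _); apply: val_inj.
Qed.

Lemma sum_ffun4 (A : finType) (F : {ffun 'I_4 -> A} -> nat) :
  (\sum_f F f = \sum_a \sum_b \sum_c \sum_d F (ffun4 a b c d))%N.
Proof.
rewrite !pair_bigA /= (reindex (fun t : A * A * A * A => ffun4 t.1.1.1 t.1.1.2 t.1.2 t.2)) //=.
exists (fun f => (f ord0, f (@Ordinal 4 1 isT), f (@Ordinal 4 2 isT), f (@Ordinal 4 3 isT)))
  => [[[[a b] c] d] | f] _.
  by rewrite /= !ffunE.
by apply/ffunP => -[[|[|[|[|//]]]] i]; rewrite !ffunE /=; congr (f _); apply: val_inj.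
Qed.

Definition cyclic3 (T : tournament) (a b c : 'I_(tn_size T)) : bool :=
  [&& tadj a b, tadj b c & tadj c a].

Definition c4_quad (T : tournament) (a b c d : 'I_(tn_size T)) : bool :=
  [&& tadj a b, tadj b c, tadj c d, tadj d a, tadj a c & tadj b d].

Lemma preserves_adj_ffun3 (T : tournament) (a b c : 'I_(tn_size T)) :
  preserves_adj (H := C3) (ffun3 a b c) = cyclic3 a b c.
Proof.
pose o k (k3 : (k < 3)%N) := Ordinal k3.
apply/preserves_adjP/and3P => [fP | [ab bc ca] [[|[|[|//]]] ?] [[|[|[|//]]] ?]].
  split; [have := fP (o 0 isT) (o 1 isT) | have := fP (o 1 isT) (o 2 isT)
          | have := fP (o 2 isT) (o 0 isT)]; by rewrite !ffunE.
all: by rewrite !ffunE /= ?tadj_irr ?ab ?bc ?ca ?(tadj_asym ab) ?(tadj_asym bc) ?(tadj_asym ca).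
Qed.

Lemma card_embeddings_C3 (T : tournament) :
  #|embeddings C3 T| = (\sum_a \sum_b \sum_c cyclic3 (T := T) a b c)%N.
Proof.
rewrite -sum1_card big_mkcond sum_ffun3 /=.
by do 3![apply: eq_bigr => ? _]; rewrite inE preserves_adj_ffun3.
Qed.

Lemma preserves_adj_ffun4 (T : tournament) (a b c d : 'I_(tn_size T)) :
  preserves_adj (H := C4) (ffun4 a b c d) = c4_quad a b c d.
Proof.
pose o k (k4 : (k < 4)%N) := Ordinal k4.
apply/preserves_adjP/idP => [fP | ].
  rewrite /c4_quad; move: (fP (o 0 isT) (o 1 isT)) (fP (o 1 isT) (o 2 isT)) (fP (o 2 isT) (o 3 isT))
    (fP (o 3 isT) (o 0 isT)) (fP (o 0 isT) (o 2 isT)) (fP (o 1 isT) (o 3 isT)).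
  by rewrite !ffunE => <- <- <- <- <- <-.
case/and5P => ab bc cd da /andP[ac bd] [[|[|[|[|//]]]] ?] [[|[|[|[|//]]]] ?];
  by rewrite !ffunE /= ?tadj_irr ?ab ?bc ?cd ?da ?ac ?bd ?(tadj_asym ab) ?(tadj_asym bc)
       ?(tadj_asym cd) ?(tadj_asym da) ?(tadj_asym ac) ?(tadj_asym bd).
Qed.

Lemma card_embeddings_C4 (T : tournament) :
  #|embeddings C4 T| = (\sum_a \sum_b \sum_c \sum_d c4_quad (T := T) a b c d)%N.
Proof.
rewrite -sum1_card big_mkcond sum_ffun4 /=.
by do 4![apply: eq_bigr => ? _]; rewrite inE preserves_adj_ffun4.
Qed.

Lemma card_aut_C3 : #|embeddings C3 C3| = 3.
Proof. by rewrite card_embeddings_C3 !big_ord_recr !big_ord0. Qed.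

Lemma card_aut_C4 : #|embeddings C4 C4| = 1.
Proof. by rewrite card_embeddings_C4 !big_ord_recl !big_ord0. Qed.

Local Open Scope ring_scope.

Lemma sumr_neq (R : pzRingType) (I : finType) (i : I) (F : I -> R) :
  \sum_j (i != j)%:R * F j = \sum_j F j - F i.
Proof.
rewrite [in RHS](bigD1 i) //= addrAC subrr add0r (bigD1 i) //= eqxx mul0r add0r.
by apply: eq_bigr => j; rewrite eq_sym => ->; rewrite mul1r.
Qed.

Lemma natr_andb (R : pzSemiRingType) (a b : bool) : (a && b)%:R = a%:R * b%:R :> R.
Proof. by rewrite -natrM mulnb. Qed.

Section ArcSums.
Variables (R : comPzRingType) (T : tournament).
Local Notation n := (tn_size T).
Local Notation V := 'I_n.
Implicit Types (a b c d x y u v w z : V) (g : V -> V -> R).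

Definition outdeg x : R := \sum_y (tadj x y)%:R.
Definition n_arcs : R := \sum_x outdeg x.
Definition outdeg_sqsum : R := \sum_x outdeg x ^+ 2.
Definition n_cyclic3 : R := \sum_(a : V) \sum_(b : V) \sum_(c : V) (cyclic3 a b c)%:R.
Definition n_c4quad : R :=
  \sum_(a : V) \sum_(b : V) \sum_(c : V) \sum_(d : V) (c4_quad a b c d)%:R.
Definition n_closing u v : R := \sum_w (tadj v w && tadj w u)%:R.

Lemma adj_addC x y : (tadj x y)%:R + (tadj y x)%:R = (x != y)%:R :> R.
Proof.
have [->|xy] := eqVneq x y; first by rewrite tadj_irr addr0.
by rewrite (tadj_total xy); case: (tadj y x); rewrite ?addr0 ?add0r.
Qed.

Lemma sum_adj_add_rev g :
  \sum_u \sum_v (tadj u v)%:R * g u v + \sum_u \sum_v (tadj u v)%:R * g v u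
  = \sum_u \sum_v (u != v)%:R * g u v.
Proof.
rewrite [X in _ + X]exchange_big -big_split; apply: eq_bigr => u _.
by rewrite -big_split; apply: eq_bigr => v _; rewrite /= -mulrDl adj_addC.
Qed.

Lemma sum_adj_symmetric g : (forall u v, g u v = g v u) ->
  2 * \sum_u \sum_v (tadj u v)%:R * g u v = \sum_u \sum_v (u != v)%:R * g u v.
Proof.
move=> gC; rewrite mulr_natl mulr2n -sum_adj_add_rev; congr (_ + _).
by do 2!(apply: eq_bigr => ? _); rewrite gC.
Qed.

Lemma indeg_outdeg v : \sum_u (tadj u v)%:R = n%:R - 1 - outdeg v.
Proof.
have := sumr_neq v (fun _ => 1 : R); rewrite sumr_const card_ord => <-.
by rewrite /outdeg -sumrB; apply: eq_bigr => u _; rewrite mulr1 -adj_addC addrC addKr.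
Qed.

Lemma n_arcs_double : 2 * n_arcs = n%:R * (n%:R - 1).
Proof.
have : n_arcs = \sum_v (n%:R - 1 - outdeg v).
  by rewrite /n_arcs /outdeg exchange_big; apply: eq_bigr => v _; rewrite indeg_outdeg.
rewrite sumrB sumr_const card_ord -/n_arcs => e.
by rewrite !mulr_natl mulr2n {1}e subrK.
Qed.

Lemma sum_adj_outdeg :
  \sum_u \sum_v (tadj u v)%:R * outdeg v = (n%:R - 1) * n_arcs - outdeg_sqsum.
Proof.
rewrite exchange_big /=; under eq_bigr => v _ do rewrite -mulr_suml indeg_outdeg.
by rewrite /n_arcs /outdeg_sqsum mulr_sumr -sumrB; apply: eq_bigr => v _; ring.
Qed.

Lemma sum_arc_outdeg_diff :
  \sum_u \sum_v (tadj u v)%:R * (outdeg v - outdeg u) = (n%:R - 1) * n_arcs - 2 * outdeg_sqsum.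
Proof.
transitivity (\sum_u \sum_v (tadj u v)%:R * outdeg v - outdeg_sqsum).
  rewrite /outdeg_sqsum -sumrB; apply: eq_bigr => u _.
  by rewrite expr2 [X in X * _]/outdeg mulr_suml -sumrB; apply: eq_bigr => v _; ring.
by rewrite sum_adj_outdeg; ring.
Qed.

Lemma cyclic3_split a b c :
  (cyclic3 a b c)%:R = (tadj a b)%:R * (tadj b c)%:R * (1 - (tadj a c)%:R) :> R.
Proof.
rewrite /cyclic3; have [ab|] /= := boolP (tadj a b); last by rewrite !mul0r.
have [bc|] /= := boolP (tadj b c); last by rewrite mulr0 mul0r.
have ac : a != c by apply: contraTneq bc => <-; rewrite tadj_asym.
by rewrite (tadj_total ac); case: (tadj c a); rewrite ?subr0 ?subrr ?mulr0 ?mulr1.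
Qed.

Lemma sum_transitive3 :
  2 * \sum_(a : V) \sum_b \sum_c (tadj a b)%:R * (tadj b c)%:R * (tadj a c)%:R
  = outdeg_sqsum - n_arcs :> R.
Proof.
rewrite mulr_sumr /outdeg_sqsum /n_arcs -sumrB; apply: eq_bigr => a _.
rewrite (eq_bigr (fun b => \sum_c (tadj b c)%:R * ((tadj a b)%:R * (tadj a c)%:R))) => [|b _];
  last by apply: eq_bigr => c _; rewrite mulrAC mulrC.
rewrite sum_adj_symmetric => [|b c]; last exact: mulrC.
under eq_bigr => b _ do rewrite sumr_neq -natrM mulnb andbb -mulr_sumr.
by rewrite sumrB -mulr_suml expr2.
Qed.

Lemma n_cyclic3_double :
  2 * n_cyclic3 = (2 * n%:R - 1) * n_arcs - 3 * outdeg_sqsum.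
Proof.
have paths2 : \sum_(a : V) \sum_b \sum_c (tadj a b)%:R * (tadj b c)%:R
              = (n%:R - 1) * n_arcs - outdeg_sqsum :> R.
  by rewrite -sum_adj_outdeg; do 2!(apply: eq_bigr => ? _); rewrite mulr_sumr.
have -> : n_cyclic3 = \sum_(a : V) \sum_b \sum_c (tadj a b)%:R * (tadj b c)%:R
            - \sum_(a : V) \sum_b \sum_c (tadj a b)%:R * (tadj b c)%:R * (tadj a c)%:R.
  rewrite /n_cyclic3 -sumrB; apply: eq_bigr => a _; rewrite -sumrB; apply: eq_bigr => b _.
  by rewrite -sumrB; apply: eq_bigr => c _; rewrite cyclic3_split mulrBr mulr1.
by rewrite mulrBr sum_transitive3 paths2; ring.
Qed.

Lemma sum_arc_closing : \sum_u \sum_v (tadj u v)%:R * n_closing u v = n_cyclic3.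
Proof.
rewrite /n_cyclic3 /n_closing; do 2!(apply: eq_bigr => ? _).
by rewrite mulr_sumr; apply: eq_bigr => w _; rewrite /cyclic3 !natr_andb mulrA.
Qed.

Lemma cyclic3_rot a b c : cyclic3 c a b = cyclic3 a b c.
Proof. by rewrite /cyclic3 andbC andbA. Qed.

(* The rotation (u, v, w) -> (w, u, v) of cyclic triples exchanges the two out-degree terms. *)
Lemma sum_arc_closing_outdeg_diff :
  \sum_u \sum_v (tadj u v)%:R * (n_closing u v * (outdeg v - outdeg u)) = 0.
Proof.
pose S (f : V -> V -> R) := \sum_u \sum_v \sum_w (cyclic3 u v w)%:R * f u v.
transitivity (S (fun _ v => outdeg v) - S (fun u _ => outdeg u)).
  rewrite /S -sumrB; apply: eq_bigr => u _; rewrite -sumrB; apply: eq_bigr => v _.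
  rewrite -[in RHS]sumrB /n_closing mulr_suml mulr_sumr; apply: eq_bigr => w _.
  by rewrite /cyclic3 !natr_andb; ring.
apply/eqP; rewrite subr_eq0; apply/eqP; rewrite /S exchange_big /=.
apply: eq_bigr => v _; rewrite exchange_big /=.
by apply: eq_bigr => w _; apply: eq_bigr => u _; rewrite cyclic3_rot.
Qed.

Lemma n_closing_sq u v :
  n_closing u v ^+ 2 = 2 * \sum_w \sum_z (tadj w z)%:R *
      ((tadj v w && tadj w u)%:R * (tadj v z && tadj z u)%:R) + n_closing u v.
Proof.
rewrite sum_adj_symmetric => [|w z]; last exact: mulrC.
under eq_bigr => w _ do rewrite sumr_neq -natrM mulnb andbb.
by rewrite sumrB subrK expr2 /n_closing mulr_suml; apply: eq_bigr => w _; rewrite mulr_sumr.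
Qed.

Lemma n_c4quad_closing : n_c4quad = \sum_(u : V) \sum_v \sum_w \sum_z (tadj u v)%:R *
    ((tadj w z)%:R * ((tadj v w && tadj w u)%:R * (tadj v z && tadj z u)%:R)).
Proof.
rewrite /n_c4quad [RHS]exchange_big /=; apply: eq_bigr => v _.
rewrite [RHS]exchange_big /=; apply: eq_bigr => w _.
rewrite [RHS]exchange_big /=; apply: eq_bigr => z _; apply: eq_bigr => u _.
by rewrite /c4_quad !natr_andb; ring.
Qed.

Lemma sum_arc_closing_sq :
  \sum_u \sum_v (tadj u v)%:R * n_closing u v ^+ 2 = 2 * n_c4quad + n_cyclic3.
Proof.
rewrite n_c4quad_closing -sum_arc_closing mulr_sumr -big_split; apply: eq_bigr => u _.
rewrite mulr_sumr -big_split; apply: eq_bigr => v _.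
rewrite /= n_closing_sq mulrDr mulrCA mulr_sumr; congr (2 * _ + _).
by apply: eq_bigr => w _; rewrite mulr_sumr.
Qed.

End ArcSums.

Lemma sum_sqr_diff_weighted (R : comPzRingType) (I : finType) (w X : I -> R) :
  \sum_i \sum_j w i * w j * (X i - X j) ^+ 2 =
  2 * ((\sum_i w i) * (\sum_i w i * X i ^+ 2) - (\sum_i w i * X i) ^+ 2).
Proof.
have -> : (\sum_i w i) * (\sum_i w i * X i ^+ 2) - (\sum_i w i * X i) ^+ 2 =
    \sum_i \sum_j (w i * (w j * X j ^+ 2) - w i * X i * (w j * X j)).
  rewrite expr2 !mulr_suml -sumrB; apply: eq_bigr => i _.
  by rewrite !mulr_sumr -sumrB.
rewrite mulr_natl mulr2n [X in _ = _ + X]exchange_big -big_split; apply: eq_bigr => i _.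
by rewrite -big_split; apply: eq_bigr => j _; rewrite /=; ring.
Qed.

Lemma sumr_sqr_le_weighted (R : realDomainType) (I : finType) (w X : I -> R) :
  (forall i, 0 <= w i) ->
  (\sum_i w i * X i) ^+ 2 <= (\sum_i w i) * (\sum_i w i * X i ^+ 2).
Proof.
move=> w_ge0; rewrite -subr_ge0 -(pmulr_rge0 _ (ltr0Sn _ 1)) -sum_sqr_diff_weighted.
by do 2!(apply: sumr_ge0 => ? _); rewrite mulr_ge0 ?sqr_ge0 ?mulr_ge0.
Qed.

Lemma sum_arc_outdeg_diff_sq (R : numDomainType) (T : tournament) :
  \sum_(u : 'I_(tn_size T)) \sum_v (tadj u v)%:R * (outdeg R v - outdeg R u) ^+ 2
  = (tn_size T)%:R * outdeg_sqsum R T - n_arcs R T ^+ 2.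
Proof.
have two_neq0 : (2 : R) != 0 by rewrite pnatr_eq0.
apply/(mulfI two_neq0).
rewrite sum_adj_symmetric => [|u v]; last by rewrite -sqrrN opprB.
transitivity (\sum_(u : 'I_(tn_size T)) \sum_(v : 'I_(tn_size T))
                1 * 1 * (outdeg R u - outdeg R v) ^+ 2).
  do 2!(apply: eq_bigr => ? _); case: eqVneq => [->|_]; last by rewrite !mul1r -sqrrN opprB.
  by rewrite !subrr expr0n !mulr0.
rewrite sum_sqr_diff_weighted sumr_const card_ord.
by congr (2 * (_ * _ - _ ^+ 2)); apply: eq_bigr => u _; rewrite mul1r.
Qed.

Lemma cauchy_schwarz_counts (R : realDomainType) (T : tournament) (lam : R) :
  let n := (tn_size T)%:R in let m := n_arcs R T in let s2 := outdeg_sqsum R T in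
  ((1 + lam) * n_cyclic3 R T - lam * ((n - 1) * m - 2 * s2)) ^+ 2 <=
  m * ((1 + lam) ^+ 2 * (2 * n_c4quad R T + n_cyclic3 R T) + lam ^+ 2 * (n * s2 - m ^+ 2)).
Proof.
pose w (p : 'I_(tn_size T) * 'I_(tn_size T)) : R := (tadj p.1 p.2)%:R.
pose ncl (p : 'I_(tn_size T) * 'I_(tn_size T)) := n_closing R p.1 p.2.
pose dd (p : 'I_(tn_size T) * 'I_(tn_size T)) := outdeg R p.2 - outdeg R p.1.
have := sumr_sqr_le_weighted (fun p => (1 + lam) * ncl p - lam * dd p)
  (fun p => ler0n _ (tadj p.1 p.2)).
have -> : \sum_p w p * ((1 + lam) * ncl p - lam * dd p) =
          (1 + lam) * \sum_p w p * ncl p - lam * \sum_p w p * dd p.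
  by rewrite !mulr_sumr -sumrB; apply: eq_bigr => p _; ring.
have -> : \sum_p w p * ((1 + lam) * ncl p - lam * dd p) ^+ 2 =
    (1 + lam) ^+ 2 * \sum_p w p * ncl p ^+ 2 - 2 * lam * (1 + lam) * \sum_p w p * (ncl p * dd p)
    + lam ^+ 2 * \sum_p w p * dd p ^+ 2.
  by rewrite !mulr_sumr -sumrB -big_split; apply: eq_bigr => p _ /=; ring.
have pairE (F : 'I_(tn_size T) -> 'I_(tn_size T) -> R) :
    \sum_p w p * F p.1 p.2 = \sum_u \sum_v (tadj u v)%:R * F u v by rewrite pair_bigA.
have -> : \sum_p w p = n_arcs R T.
  by rewrite -(pair_bigA _ (fun u v : 'I_(tn_size T) => (tadj u v)%:R : R)).
rewrite (pairE (fun u v => n_closing R u v)) (pairE (fun u v => outdeg R v - outdeg R u)).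
rewrite (pairE (fun u v => n_closing R u v ^+ 2)).
rewrite (pairE (fun u v => n_closing R u v * (outdeg R v - outdeg R u))).
rewrite (pairE (fun u v => (outdeg R v - outdeg R u) ^+ 2)) /=.
rewrite sum_arc_closing sum_arc_outdeg_diff sum_arc_closing_sq sum_arc_closing_outdeg_diff.
by rewrite sum_arc_outdeg_diff_sq mulr0 subr0.
Qed.

Lemma n_cyclic3_ind_count (R : comPzRingType) (T : tournament) :
  n_cyclic3 R T = 3 * (ind_count C3 T)%:R.
Proof.
have := card_embeddings C3 T; rewrite card_aut_C3 card_embeddings_C3 => e.
by rewrite -natrM -e /n_cyclic3; do 3!(rewrite natr_sum; apply: eq_bigr => ? _).
Qed.

Lemma n_c4quad_ind_count (R : comPzRingType) (T : tournament) :
  n_c4quad R T = (ind_count C4 T)%:R.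
Proof.
have := card_embeddings C4 T; rewrite card_aut_C4 mul1n card_embeddings_C4 => <-.
by rewrite /n_c4quad; do 4!(rewrite natr_sum; apply: eq_bigr => ? _).
Qed.

Lemma binom3_natr (R : comPzRingType) (n : nat) : (3 <= n)%N ->
  'C(n, 3)%:R * 6 = n%:R * (n%:R - 1) * (n%:R - 2) :> R.
Proof.
move=> /subnK <-; have := congr1 (fun k => k%:R : R) (bin_ffact (n - 3).+3 3).
by rewrite !ffactnS ffactn0 /= natrM addn3 => ->; rewrite !natrM -!natr1; ring.
Qed.

Lemma binom4_natr (R : comPzRingType) (n : nat) : (4 <= n)%N ->
  'C(n, 4)%:R * 24 = n%:R * (n%:R - 1) * (n%:R - 2) * (n%:R - 3) :> R.
Proof.
move=> /subnK <-; have := congr1 (fun k => k%:R : R) (bin_ffact (n - 4).+4 4).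
by rewrite !ffactnS ffactn0 /= natrM addn4 => ->; rewrite !natrM -!natr1; ring.
Qed.

Definition cs_slack (R : pzRingType) (lam x m e3 e4 s2 : R) : R :=
  m * ((1 + lam) ^+ 2 * (2 * e4 + x * e3) + lam ^+ 2 * (s2 - m ^+ 2))
  - ((1 + lam) * e3 - lam * ((1 - x) * m - 2 * s2)) ^+ 2.

Lemma cs_slack_scale (R : fieldType) (lam N m e3 e4 s2 : R) : N != 0 ->
  N ^+ 6 * cs_slack lam N^-1 (m / N ^+ 2) (e3 / N ^+ 3) (e4 / N ^+ 4) (s2 / N ^+ 3) =
  m * ((1 + lam) ^+ 2 * (2 * e4 + e3) + lam ^+ 2 * (N * s2 - m ^+ 2))
  - ((1 + lam) * e3 - lam * ((N - 1) * m - 2 * s2)) ^+ 2.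
Proof. by move=> N0; rewrite /cs_slack; field. Qed.

(* [cs_slack] at the normalised counts m/n^2, E3/n^3, E4/n^4 and S2/n^3 of an n-vertex
   tournament, expressed through x = 1/n, p = pr(C3, T) and q = pr(C4, T). *)
Definition density_slack (R : fieldType) (lam x p q : R) : R :=
  cs_slack lam x ((1 - x) / 2) (p * (1 - x) * (1 - 2 * x) / 2)
    (q * (1 - x) * (1 - 2 * x) * (1 - 3 * x) / 24)
    (((2 - x) * (1 - x) / 2 - p * (1 - x) * (1 - 2 * x)) / 3).

Lemma density_slack_ge0 (R : realType) (lam : R) (T : tournament) :
  (4 <= tn_size T)%N ->
  0 <= density_slack lam (tn_size T)%:R^-1 (pr C3 T) (pr C4 T).
Proof.
move=> n_ge4; set N : R := (tn_size T)%:R.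
have N_gt0 : 0 < N by rewrite ltr0n; lia.
have N0 : N != 0 by rewrite gt_eqF.
have binom_neq0 k : (k <= 4)%N -> 'C(tn_size T, k)%:R != 0 :> R.
  by move=> k4; rewrite pnatr_eq0 -lt0n bin_gt0; lia.
have m_val : n_arcs R T = N * (N - 1) / 2.
  by rewrite -n_arcs_double; field.
have e3_val : n_cyclic3 R T = pr C3 T * (N * (N - 1) * (N - 2)) / 2.
  rewrite n_cyclic3_ind_count /pr /= -binom3_natr; last lia.
  by field; exact: binom_neq0.
have e4_val : n_c4quad R T = pr C4 T * (N * (N - 1) * (N - 2) * (N - 3)) / 24.
  rewrite n_c4quad_ind_count /pr /= -binom4_natr; last lia.
  by field; exact: binom_neq0.
have s2_val : outdeg_sqsum R T = ((2 * N - 1) * n_arcs R T - 2 * n_cyclic3 R T) / 3.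
  by rewrite n_cyclic3_double; field.
suff -> : density_slack lam N^-1 (pr C3 T) (pr C4 T) = cs_slack lam N^-1
    (n_arcs R T / N ^+ 2) (n_cyclic3 R T / N ^+ 3) (n_c4quad R T / N ^+ 4)
    (outdeg_sqsum R T / N ^+ 3).
  have /= := cauchy_schwarz_counts T lam.
  by rewrite -subr_ge0 -cs_slack_scale // pmulr_rge0 ?exprn_gt0.
rewrite s2_val m_val e3_val e4_val /density_slack.
by congr (cs_slack _ _ _ _ _ _); field.
Qed.

Local Open Scope classical_set_scope.

(* This value of lam maximises the resulting lower bound on d. *)
Lemma density_slack_bound (R : realFieldType) (c d : R) : 0 <= c ->
  0 <= density_slack (6 * c / (1 + 2 * c)) 0 c d -> 18 * c ^+ 2 / (1 + 8 * c) <= d.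
Proof.
move=> c_ge0; have c2_gt0 : 0 < 1 + 2 * c by lra.
have c8_gt0 : 0 < 1 + 8 * c by lra.
have -> : density_slack (6 * c / (1 + 2 * c)) 0 c d =
    (1 + 8 * c) / (24 * (1 + 2 * c) ^+ 2) * (d * (1 + 8 * c) - 18 * c ^+ 2).
  by rewrite /density_slack /cs_slack; field; rewrite gt_eqF.
by rewrite pmulr_rge0 ?subr_ge0 -?ler_pdivrMr // divr_gt0 ?mulr_gt0 ?exprn_gt0.
Qed.

Lemma cvg_sqr (R : numFieldType) (f : nat -> R) (a : R) :
  f @ \oo --> a -> (fun k => f k ^+ 2) @ \oo --> a ^+ 2.
Proof. by move=> fa; rewrite expr2; under eq_fun do rewrite expr2; exact: cvgM. Qed.

Lemma density_slack_cvg (R : realType) (lam : R) (x p q : nat -> R) (c d : R) :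
  x @ \oo --> 0 -> p @ \oo --> c -> q @ \oo --> d ->
  (fun k => density_slack lam (x k) (p k) (q k)) @ \oo --> density_slack lam 0 c d.
Proof.
move=> *; rewrite /density_slack /cs_slack.
repeat lazymatch goal with
  | |- (fun _ => _ + _) @ _ --> _ => apply: cvgD
  | |- (fun _ => _ - _) @ _ --> _ => apply: cvgB
  | |- (fun _ => _ * _) @ _ --> _ => apply: cvgM
  | |- (fun _ => - _) @ _ --> _ => apply: cvgN
  | |- (fun _ => _ ^+ 2) @ _ --> _ => apply: cvg_sqr
  | |- _ => first [assumption | exact: cvg_cst]
  end.
Qed.

Lemma invr_natr_cvg0 (R : realType) (f : nat -> nat) :
  (forall M, exists N, forall m, (N <= m)%N -> (M <= f m)%N) ->
  (fun m => (f m)%:R^-1 : R) @ \oo --> 0.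
Proof.
move=> f_oo; have /cvgnyPge f_cvg : f @ \oo --> \oo.
  apply/cvgnyPge => M; have [N fN] := f_oo M.
  by near=> m; apply: fN; near: m; exact: nbhs_infty_ge.
apply/gtr0_cvgV0; last exact/cvgrnyP/cvgnyPge.
by near do rewrite ltr0n; exact: f_cvg 1%N.
Unshelve. all: by end_near.
Qed.

Lemma pr_ge0 (R : realType) (H T : tournament) : 0 <= pr H T :> R.
Proof. by rewrite divr_ge0. Qed.

Theorem lemma2p5 (R : realType) (T : nat -> tournament) (c3 c4 : R) :
  (forall M : nat, exists N : nat, forall m : nat, (N <= m)%N -> (M <= tn_size (T m))%N) ->
  (fun m => pr C3 (T m) : R) @ \oo --> c3 ->
  (fun m => pr C4 (T m) : R) @ \oo --> c4 ->
  18 * c3 ^+ 2 / (1 + 8 * c3) <= c4.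
Proof.
move=> size_oo pr3 pr4.
have c3_ge0 : 0 <= c3 by apply: (cvgr_to_ge pr3); near=> m; exact: pr_ge0.
apply: (density_slack_bound c3_ge0).
apply: (cvgr_to_ge (density_slack_cvg (invr_natr_cvg0 size_oo) pr3 pr4)).
have [N sizeN] := size_oo 4%N.
by near=> m; apply/density_slack_ge0/sizeN; near: m; exact: nbhs_infty_ge.
Unshelve. all: by end_near.
Qed.
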